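(* Let $\mu$ be a Borel probability measure on $[0,1]$ and let $(v_k)_{k=1}^M\subseteq[0,1]$ with $M\in\mathbb{N}\cup\{\infty\}$. Then there exists $(x_k)_{k=1}^M\subseteq[0,1]$ such that for all integers $2\leq N\leq M$, $$D^*_N\Big(\mu;\tfrac1N\textstyle\sum_{i=1}^N\delta_{x_i}\Big)\leq D^*_N\Big(\lambda_1;\tfrac1N\textstyle\sum_{i=1}^N\delta_{v_i}\Big).$$ Moreover, if $\mu$ has no point masses (i.e. $\mu(\{x\})=0$ for every $x\in[0,1]$), then equality holds for all such $N$.
   Context: $\lambda_1$ is Lebesgue measure on $[0,1]$ and $\delta_y$ the Dirac measure at $y$. For probability measures $\mu,\nu$ on $[0,1]$, the star-discrepancy is $D^*_N(\mu;\nu)=\sup_{b\in[0,1]}|\mu([0,b))-\nu([0,b))|$ (supremum over half-open intervals anchored at $0$). *)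

From Stdlib Require Import Reals Lra.
Open Scope R_scope.

Inductive borel : (R -> Prop) -> Prop :=
| borel_interval (a b : R) : borel (fun x => a < x < b)
| borel_compl (A : R -> Prop) : borel A -> borel (fun x => ~ A x)
| borel_union (A : nat -> R -> Prop) :
    (forall n, borel (A n)) -> borel (fun x => exists n, A n x).

(* A Borel probability measure on [0,1], represented as a countably additive
   nonnegative set function on the Borel sets of R concentrated on [0,1]. *)
Record borel_prob_01 (mu : (R -> Prop) -> R) : Prop := {
  bp_nonneg : forall A, borel A -> 0 <= mu A;
  bp_empty : mu (fun _ => False) = 0;
  bp_sigma_add : forall A : nat -> R -> Prop,
      (forall n, borel (A n)) ->
      (forall m n x, m <> n -> A m x -> A n x -> False) ->
      infinite_sum (fun n => mu (A n)) (mu (fun x => exists n, A n x));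
  bp_total : mu (fun x => 0 <= x <= 1) = 1;
  bp_support : mu (fun x => ~ (0 <= x <= 1)) = 0 }.

Definition no_point_masses (mu : (R -> Prop) -> R) : Prop :=
  forall x, 0 <= x <= 1 -> mu (fun t => t = x) = 0.

Definition Ico0 (b : R) : R -> Prop := fun t => 0 <= t < b.

(* Lebesgue measure lambda_1 of [0,b), for b in [0,1]. *)
Definition lambda1_Ico0 (b : R) : R := b.

Fixpoint count_Ico0 (x : nat -> R) (b : R) (n : nat) : R :=
  match n with
  | O => 0
  | S m => count_Ico0 x b m +
           (if Rle_dec 0 (x (S m)) then (if Rlt_dec (x (S m)) b then 1 else 0) else 0)
  end.

(* (1/N) sum_{i=1}^N delta_{x_i} evaluated on [0,b). *)
Definition empirical_Ico0 (x : nat -> R) (N : nat) (b : R) : R :=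
  / INR N * count_Ico0 x b N.

(* d is the star discrepancy sup_{b in [0,1]} |F b - G b| between two measures,
   given through their values F b, G b on [0,b). *)
Definition is_star_discrepancy (F G : R -> R) (d : R) : Prop :=
  is_lub (fun r => exists b, 0 <= b <= 1 /\ r = Rabs (F b - G b)) d.

(* M in N u {infinity}: None = infinity. *)
Definition le_ext (N : nat) (M : option nat) : Prop :=
  match M with None => True | Some m => (N <= m)%nat end.

Definition in_index_range (k : nat) (M : option nat) : Prop :=
  (1 <= k)%nat /\ le_ext k M.

(* Let F b = mu [0,b) and take x_k = Q (v_k), where Q v = sup {t in [0,1] | F t <= v} is the
   generalized inverse of F.  Left continuity of F gives Q v < b <-> v < F b, so the x_k fall
   into [0,b) exactly when the v_k fall into [0, F b): every deviation |F b - emp_x [0,b)| is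
   the uniform deviation |c - emp_v [0,c)| at c = F b in [0,1].  Without atoms F is also right
   continuous, hence F (Q c) = c and every c in [0,1] is reached, so the two suprema agree. *)

From Stdlib Require Import Reals Lra Lia Classical FunctionalExtensionality PropExtensionality.
Open Scope R_scope.

Lemma inv_succ_pos n : 0 < / INR (S n).
Proof. apply Rinv_0_lt_compat, lt_0_INR; lia. Qed.

Lemma inv_succ_decr n : / INR (S (S n)) <= / INR (S n).
Proof. apply Rinv_le_contravar; [apply lt_0_INR; lia | apply le_INR; lia]. Qed.

Lemma inv_succ_lt eps : 0 < eps -> exists n, / INR (S n) < eps.
Proof.
  intro Heps; destruct (archimed_cor1 eps Heps) as [N [HN HN0]].
  exists (pred N); now replace (S (pred N)) with N by lia.
Qed.

Lemma set_ext (A B : R -> Prop) : (forall x, A x <-> B x) -> A = B.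
Proof.
  intro H; apply functional_extensionality; intro x; apply propositional_extensionality; auto.
Qed.

Lemma borel_ext (A B : R -> Prop) : (forall x, A x <-> B x) -> borel A -> borel B.
Proof. intro H; now rewrite (set_ext A B H). Qed.

Lemma borel_empty : borel (fun _ => False).
Proof. apply (borel_ext (fun x => 0 < x < 0)); [intro; lra | constructor]. Qed.

Lemma borel_full : borel (fun _ => True).
Proof. apply (borel_ext (fun _ => ~ False)); [tauto | apply borel_compl, borel_empty]. Qed.

Lemma borel_union2 A B : borel A -> borel B -> borel (fun x => A x \/ B x).
Proof.
  intros HA HB.
  apply (borel_ext (fun x => exists n, (match n with O => A | _ => B end) x)).
  - intro x; split; [intros [[|n] H]; auto | intros [H|H]; [exists O | exists 1%nat]; auto].
  - constructor; intros [|n]; auto.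
Qed.

Lemma borel_inter A B : borel A -> borel B -> borel (fun x => A x /\ B x).
Proof.
  intros HA HB.
  apply (borel_ext (fun x => ~ (~ A x \/ ~ B x))).
  - intro x; split; [intro H; split; apply NNPP; tauto | tauto].
  - apply borel_compl, borel_union2; now apply borel_compl.
Qed.

Lemma borel_countable_inter (A : nat -> R -> Prop) :
  (forall n, borel (A n)) -> borel (fun x => forall n, A n x).
Proof.
  intro HA; apply (borel_ext (fun x => ~ exists n, ~ A n x)).
  - intro x; split; [intros H n; apply NNPP; eauto | intros H [n Hn]; auto].
  - apply borel_compl, borel_union; intro n; now apply borel_compl.
Qed.

Lemma borel_lt a : borel (fun x => x < a).
Proof.
  apply (borel_ext (fun x => exists n, a - INR n < x < a)).
  - intro x; split; [intros [n H]; lra|].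
    intro H; destruct (INR_archimed 1 (a - x)) as [n Hn]; [lra|].
    exists n; lra.
  - constructor; intro n; constructor.
Qed.

Lemma borel_ge a : borel (fun x => a <= x).
Proof. apply (borel_ext (fun x => ~ x < a)); [intro; lra | apply borel_compl, borel_lt]. Qed.

Lemma borel_gt a : borel (fun x => a < x).
Proof.
  apply (borel_ext (fun x => exists n, a < x < a + INR n)).
  - intro x; split; [intros [n H]; lra|].
    intro H; destruct (INR_archimed 1 (x - a)) as [n Hn]; [lra|].
    exists n; lra.
  - constructor; intro n; constructor.
Qed.

Lemma borel_le a : borel (fun x => x <= a).
Proof. apply (borel_ext (fun x => ~ a < x)); [intro; lra | apply borel_compl, borel_gt]. Qed.

Lemma borel_Ico0 b : borel (Ico0 b).
Proof. apply borel_inter; [apply borel_ge | apply borel_lt]. Qed.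

Lemma borel_Icc a b : borel (fun x => a <= x <= b).
Proof. apply borel_inter; [apply borel_ge | apply borel_le]. Qed.

Lemma borel_singleton a : borel (fun x => x = a).
Proof. apply (borel_ext (fun x => a <= x <= a)); [intro; lra | apply borel_Icc]. Qed.
Section BorelProbability.

Variable mu : (R -> Prop) -> R.
Hypothesis Hmu : borel_prob_01 mu.

Lemma mu_ext A B : (forall x, A x <-> B x) -> mu A = mu B.
Proof. intro H; now rewrite (set_ext A B H). Qed.

Lemma mu_nonneg A : borel A -> 0 <= mu A.
Proof. apply (bp_nonneg mu Hmu). Qed.

Lemma mu_add A B : borel A -> borel B -> (forall x, A x -> B x -> False) ->
  mu (fun x => A x \/ B x) = mu A + mu B.
Proof.
  intros HA HB Hdisj.
  set (S := fun n => match n with O => A | 1%nat => B | _ => fun _ : R => False end).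
  assert (Hsum : infinite_sum (fun n => mu (S n)) (mu (fun x => A x \/ B x))).
  { rewrite (mu_ext _ (fun x => exists n, S n x)).
    - apply (bp_sigma_add mu Hmu).
      + intros [|[|n]]; simpl; auto using borel_empty.
      + intros [|[|m]] [|[|n]] x Hmn; simpl; try tauto; try lia; eauto.
    - intro x; split.
      + intros [Ha|Hb]; [exists O | exists 1%nat]; auto.
      + intros [[|[|n]] Hn]; simpl in Hn; tauto. }
  apply (uniqueness_sum _ _ _ Hsum).
  intros eps Heps; exists 1%nat; intros n Hn.
  assert (Hpartial : sum_f_R0 (fun n => mu (S n)) n = mu A + mu B).
  { induction n as [|n IH]; [lia|].
    destruct n as [|n]; [reflexivity|].
    cbn [sum_f_R0] in *; rewrite IH by lia; simpl; rewrite (bp_empty mu Hmu); lra. }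
  rewrite Hpartial; unfold Rdist; rewrite Rminus_diag, Rabs_R0; lra.
Qed.

Lemma mu_mono A B : borel A -> borel B -> (forall x, A x -> B x) -> mu A <= mu B.
Proof.
  intros HA HB Hsub.
  assert (HBA : borel (fun x => B x /\ ~ A x)) by (apply borel_inter; auto using borel_compl).
  rewrite (mu_ext B (fun x => A x \/ (B x /\ ~ A x))).
  - rewrite mu_add by (auto; tauto). pose proof (mu_nonneg _ HBA); lra.
  - intro x; destruct (classic (A x)); intuition.
Qed.

Lemma mu_full : mu (fun _ => True) = 1.
Proof.
  rewrite (mu_ext _ (fun x => 0 <= x <= 1 \/ ~ (0 <= x <= 1))).
  - rewrite mu_add by (auto using borel_Icc, borel_compl; tauto).
    rewrite (bp_total mu Hmu), (bp_support mu Hmu); lra.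
  - intro x; split; [intros _; apply classic | auto].
Qed.

Lemma mu_compl A : borel A -> mu (fun x => ~ A x) = 1 - mu A.
Proof.
  intro HA; rewrite <- mu_full, (mu_ext (fun _ => True) (fun x => A x \/ ~ A x)).
  - rewrite mu_add by (auto using borel_compl). lra.
  - intro x; split; [intros _; apply classic | auto].
Qed.

(* Sigma-additivity applied to the differences B (S n) \ B n. *)
Lemma mu_union_incr (B : nat -> R -> Prop) :
  (forall n, borel (B n)) -> (forall n x, B n x -> B (S n) x) ->
  forall eps, 0 < eps -> exists N, mu (fun x => exists n, B n x) - eps < mu (B N).
Proof.
  intros HB Hincr eps Heps.
  assert (Hmono : forall m n x, (m <= n)%nat -> B m x -> B n x)
    by (intros m n x Hmn; induction Hmn; auto).
  set (D := fun n => match n with O => B O | S k => fun x => B (S k) x /\ ~ B k x end).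
  assert (HD : forall n, borel (D n)).
  { intros [|n]; simpl; auto. apply borel_inter; auto using borel_compl. }
  assert (HDB : forall n x, D n x -> B n x) by (intros [|n] x; simpl; tauto).
  assert (Hdisj : forall m n x, m <> n -> D m x -> D n x -> False).
  { assert (Hlt : forall m n x, (m < n)%nat -> D m x -> D n x -> False).
    { intros m [|n] x Hmn Hm Hn; [lia|]. destruct Hn as [_ Hn]. apply Hn, (Hmono m); [lia | auto]. }
    intros m n x Hmn Hm Hn; destruct (Nat.lt_total m n) as [h|[h|h]]; eauto. }
  assert (Hpartial : forall n, sum_f_R0 (fun n => mu (D n)) n = mu (B n)).
  { induction n as [|n IH]; [reflexivity|]. cbn [sum_f_R0]; rewrite IH, <- mu_add.
    - apply mu_ext; intro x; destruct (classic (B n x)); simpl; intuition.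
    - auto.
    - apply borel_inter; auto using borel_compl.
    - simpl; tauto. }
  rewrite (mu_ext _ (fun x => exists n, D n x)).
  - destruct (bp_sigma_add mu Hmu D HD Hdisj eps Heps) as [N HN]; exists N.
    specialize (HN N (le_n N)); rewrite Hpartial in HN; unfold Rdist in HN.
    apply Rabs_def2 in HN; lra.
  - intro x; split; [|intros [n Hn]; eauto].
    intros [m Hm]; induction m as [|m IH]; [now exists O|].
    destruct (classic (B m x)); auto. exists (S m); simpl; auto.
Qed.

Lemma mu_inter_decr (B : nat -> R -> Prop) :
  (forall n, borel (B n)) -> (forall n x, B (S n) x -> B n x) ->
  forall eps, 0 < eps -> exists N, mu (B N) < mu (fun x => forall n, B n x) + eps.
Proof.
  intros HB Hdecr eps Heps.
  destruct (mu_union_incr (fun n x => ~ B n x) (fun n => borel_compl _ (HB n))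
              (fun n x Hn HSn => Hn (Hdecr n x HSn)) eps Heps) as [N HN].
  assert (Hunion : mu (fun x => exists n, ~ B n x) = 1 - mu (fun x => forall n, B n x)).
  { rewrite <- mu_compl by (now apply borel_countable_inter). apply mu_ext; intro x.
    split; [intros [n Hn] H; auto | intro H; apply NNPP; intro H'; apply H].
    intro n; apply NNPP; eauto. }
  exists N. rewrite mu_compl, Hunion in HN by auto. lra.
Qed.

Definition cdf (b : R) : R := mu (Ico0 b).

Lemma cdf_ge0 b : 0 <= cdf b.
Proof. apply mu_nonneg, borel_Ico0. Qed.

Lemma cdf_le1 b : cdf b <= 1.
Proof. rewrite <- mu_full; apply mu_mono; auto using borel_Ico0, borel_full. Qed.

Lemma cdf_mono s t : s <= t -> cdf s <= cdf t.
Proof. intro; apply mu_mono; auto using borel_Ico0. unfold Ico0; intros; lra. Qed.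

Lemma cdf0 : cdf 0 = 0.
Proof.
  unfold cdf; rewrite (mu_ext _ (fun _ => False)); [apply (bp_empty mu Hmu)|].
  unfold Ico0; intro; lra.
Qed.

Lemma cdf_left_cont b v : v < cdf b -> exists t, t < b /\ v < cdf t.
Proof.
  intro Hv.
  destruct (mu_union_incr (fun n => Ico0 (b - / INR (S n)))) with (eps := cdf b - v)
    as [N HN]; [intro; apply borel_Ico0 | | lra |].
  - intros n x; unfold Ico0; pose proof (inv_succ_decr n); lra.
  - exists (b - / INR (S N)); split; [pose proof (inv_succ_pos N); lra|].
    enough (cdf b = mu (fun x => exists n, Ico0 (b - / INR (S n)) x)) by (unfold cdf; lra).
    apply mu_ext; intro x; unfold Ico0; split.
    + intros [Hx0 Hxb]; destruct (inv_succ_lt (b - x)) as [n Hn]; [lra|].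
      exists n; lra.
    + intros [n Hn]; pose proof (inv_succ_pos n); lra.
Qed.

(* The disjunct [t = 0] only serves to make the set nonempty when [v < 0]. *)
Definition quantile_set (v t : R) : Prop := 0 <= t <= 1 /\ (t = 0 \/ cdf t <= v).

Lemma quantile_set_bound v : bound (quantile_set v).
Proof. exists 1; intros t [Ht _]; lra. Qed.

Lemma quantile_set_nonempty v : exists t, quantile_set v t.
Proof. exists 0; split; [lra | now left]. Qed.

Definition quantile (v : R) : R :=
  proj1_sig (completeness _ (quantile_set_bound v) (quantile_set_nonempty v)).

Lemma quantile_lub v : is_lub (quantile_set v) (quantile v).
Proof. unfold quantile; now destruct completeness. Qed.

Lemma quantile_range v : 0 <= quantile v <= 1.
Proof.
  destruct (quantile_lub v) as [Hub Hleast]; split.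
  - apply Hub; split; [lra | now left].
  - apply Hleast; intros t [Ht _]; lra.
Qed.

Lemma quantile_set_cdf v t : 0 <= v -> quantile_set v t -> cdf t <= v.
Proof. intros Hv [_ [-> | Ht]]; [rewrite cdf0 |]; lra. Qed.

Lemma quantile_lt_iff v b : 0 <= v -> 0 <= b <= 1 -> (quantile v < b <-> v < cdf b).
Proof.
  intros Hv Hb; destruct (quantile_lub v) as [Hub Hleast]; split.
  - intro Hqb; apply Rnot_le_lt; intro Hbv.
    assert (b <= quantile v) by (apply Hub; split; auto); lra.
  - intro Hvb; destruct (cdf_left_cont b v Hvb) as [t [Htb Hvt]].
    enough (quantile v <= t) by lra.
    apply Hleast; intros s Hs; apply Rnot_lt_le; intro Hts.
    pose proof (quantile_set_cdf v s Hv Hs); pose proof (cdf_mono t s); lra.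
Qed.

Hypothesis Hatomless : no_point_masses mu.

Lemma mu_Icc0 b : 0 <= b <= 1 -> mu (fun x => 0 <= x <= b) = cdf b.
Proof.
  intro Hb; rewrite (mu_ext _ (fun x => Ico0 b x \/ x = b)) by (unfold Ico0; intro; lra).
  rewrite mu_add by (auto using borel_Ico0, borel_singleton; unfold Ico0; intros; lra).
  rewrite (Hatomless b Hb); unfold cdf; ring.
Qed.

Lemma cdf1 : cdf 1 = 1.
Proof. rewrite <- mu_Icc0 by lra; apply (bp_total mu Hmu). Qed.

Lemma cdf_right_cont b v : 0 <= b < 1 -> cdf b < v -> exists t, b < t <= 1 /\ cdf t < v.
Proof.
  intros Hb Hv.
  destruct (mu_inter_decr (fun n => Ico0 (b + / INR (S n)))) with (eps := v - cdf b)
    as [N HN]; [intro; apply borel_Ico0 | | lra |].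
  - intros n x; unfold Ico0; pose proof (inv_succ_decr n); lra.
  - exists (Rmin 1 (b + / INR (S N))).
    pose proof (inv_succ_pos N); split; [split; [apply Rmin_glb_lt; lra | apply Rmin_l]|].
    eapply Rle_lt_trans; [apply cdf_mono, Rmin_r|].
    enough (cdf b = mu (fun x => forall n, Ico0 (b + / INR (S n)) x)) by (unfold cdf in *; lra).
    rewrite <- mu_Icc0 by lra; apply mu_ext; intro x; unfold Ico0; split.
    + intros Hx n; pose proof (inv_succ_pos n); lra.
    + intro Hx; destruct (Hx O) as [Hx0 _]; split; [lra|].
      apply Rnot_lt_le; intro Hbx; destruct (inv_succ_lt (x - b)) as [n Hn]; [lra|].
      specialize (Hx n); lra.
Qed.

Lemma cdf_quantile c : 0 <= c <= 1 -> cdf (quantile c) = c.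
Proof.
  intro Hc; pose proof (quantile_range c) as Hq; apply Rle_antisym.
  - apply Rnot_lt_le; intro Hlt.
    apply (Rlt_irrefl (quantile c)), quantile_lt_iff; auto; lra.
  - apply Rnot_lt_le; intro Hlt.
    assert (Hq1 : quantile c < 1).
    { destruct Hq as [_ [Hq1 | Hq1]]; [lra|]. rewrite Hq1, cdf1 in Hlt; lra. }
    destruct (cdf_right_cont (quantile c) c) as [t [[Hqt Ht1] Htc]]; [lra | auto |].
    apply quantile_lt_iff in Hqt; lra.
Qed.
End BorelProbability.

Lemma count_Ico0_ext (x y : nat -> R) b c N :
  (forall i, (1 <= i <= N)%nat -> Ico0 b (x i) <-> Ico0 c (y i)) ->
  count_Ico0 x b N = count_Ico0 y c N.
Proof.
  induction N as [|N IH]; intro H; [reflexivity|]; cbn [count_Ico0].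
  rewrite IH by (intros i Hi; apply H; lia).
  specialize (H (S N)); unfold Ico0 in H.
  destruct (Rle_dec 0 (x (S N))), (Rlt_dec (x (S N)) b),
    (Rle_dec 0 (y (S N))), (Rlt_dec (y (S N)) c); try reflexivity;
    exfalso; destruct H as [H1 H2]; try lia; intuition lra.
Qed.

Lemma count_Ico0_bounds x b N : 0 <= count_Ico0 x b N <= INR N.
Proof.
  induction N as [|N IH]; [simpl; lra|]; cbn [count_Ico0]; rewrite S_INR.
  destruct (Rle_dec 0 (x (S N))); [destruct (Rlt_dec (x (S N)) b)|]; lra.
Qed.

Lemma empirical_Ico0_range x N b : (1 <= N)%nat -> 0 <= empirical_Ico0 x N b <= 1.
Proof.
  intro HN; unfold empirical_Ico0; pose proof (count_Ico0_bounds x b N) as Hc.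
  assert (HNpos : 0 < INR N) by (apply lt_0_INR; lia).
  split.
  - apply Rmult_le_pos; [apply Rlt_le, Rinv_0_lt_compat |]; lra.
  - apply (Rmult_le_reg_l (INR N)); auto. rewrite <- Rmult_assoc, Rinv_r; lra.
Qed.

Lemma empirical_Ico0_quantile mu v N b : borel_prob_01 mu ->
  (forall i, (1 <= i <= N)%nat -> 0 <= v i) -> 0 <= b <= 1 ->
  empirical_Ico0 (fun i => quantile mu (v i)) N b = empirical_Ico0 v N (cdf mu b).
Proof.
  intros Hmu Hv Hb; unfold empirical_Ico0; f_equal; apply count_Ico0_ext.
  intros i Hi; unfold Ico0; rewrite quantile_lt_iff by auto.
  pose proof (quantile_range mu (v i)); pose proof (Hv i Hi); intuition lra.
Qed.

Lemma star_discrepancy_exists F G K :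
  (forall b, 0 <= b <= 1 -> Rabs (F b - G b) <= K) -> exists d, is_star_discrepancy F G d.
Proof.
  intro HK; destruct (completeness (fun r => exists b, 0 <= b <= 1 /\ r = Rabs (F b - G b)))
    as [d Hd]; [| | now exists d].
  - exists K; intros r [b [Hb ->]]; auto.
  - exists (Rabs (F 0 - G 0)), 0; split; [lra | reflexivity].
Qed.

Section Reparametrization.

Variables F G F' G' : R -> R.
Variable phi : R -> R.
Hypothesis phi_range : forall b, 0 <= b <= 1 -> 0 <= phi b <= 1.
Hypothesis phi_diff : forall b, 0 <= b <= 1 -> F b - G b = F' (phi b) - G' (phi b).

Lemma star_discrepancy_reparam_le d' :
  is_star_discrepancy F' G' d' -> exists d, is_star_discrepancy F G d /\ d <= d'.
Proof.
  intros [Hub' Hleast'].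
  assert (Hbound : forall b, 0 <= b <= 1 -> Rabs (F b - G b) <= d').
  { intros b Hb; apply Hub'; exists (phi b); rewrite phi_diff; auto. }
  destruct (star_discrepancy_exists F G d' Hbound) as [d Hd]; exists d; split; auto.
  apply (proj2 Hd); intros r [b [Hb ->]]; auto.
Qed.

Lemma star_discrepancy_reparam_eq d' :
  (forall c, 0 <= c <= 1 -> exists b, 0 <= b <= 1 /\ phi b = c) ->
  is_star_discrepancy F' G' d' -> is_star_discrepancy F G d'.
Proof.
  intros Hsurj [Hub' Hleast']; split.
  - intros r [b [Hb ->]]; apply Hub'; exists (phi b); rewrite phi_diff; auto.
  - intros u Hu; apply Hleast'; intros r [c [Hc ->]].
    destruct (Hsurj c Hc) as [b [Hb <-]]; apply Hu; exists b; rewrite phi_diff; auto.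
Qed.

End Reparametrization.

Lemma le_ext_trans i N M : (i <= N)%nat -> le_ext N M -> le_ext i M.
Proof. destruct M; simpl; auto; lia. Qed.

Theorem lemma3p3 (mu : (R -> Prop) -> R) (M : option nat) (v : nat -> R) :
  borel_prob_01 mu ->
  (forall k, in_index_range k M -> 0 <= v k <= 1) ->
  exists x : nat -> R,
    (forall k, in_index_range k M -> 0 <= x k <= 1) /\
    (forall N : nat, (2 <= N)%nat -> le_ext N M ->
       exists d1 d2,
         is_star_discrepancy (fun b => mu (Ico0 b)) (empirical_Ico0 x N) d1 /\
         is_star_discrepancy lambda1_Ico0 (empirical_Ico0 v N) d2 /\
         d1 <= d2) /\
    (no_point_masses mu ->
     forall N : nat, (2 <= N)%nat -> le_ext N M ->
       exists d,
         is_star_discrepancy (fun b => mu (Ico0 b)) (empirical_Ico0 x N) d /\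
         is_star_discrepancy lambda1_Ico0 (empirical_Ico0 v N) d).
Proof.
  intros Hmu Hv; exists (fun k => quantile mu (v k)).
  assert (Hdiff : forall N, le_ext N M -> forall b, 0 <= b <= 1 ->
            mu (Ico0 b) - empirical_Ico0 (fun k => quantile mu (v k)) N b
            = lambda1_Ico0 (cdf mu b) - empirical_Ico0 v N (cdf mu b)).
  { intros N HNM b Hb; rewrite empirical_Ico0_quantile; auto.
    intros i Hi; apply Hv; split; [lia | apply (le_ext_trans i N); [lia | auto]]. }
  assert (Hcdf_range : forall b, 0 <= b <= 1 -> 0 <= cdf mu b <= 1)
    by (intros; split; [apply cdf_ge0 | apply cdf_le1]; auto).
  assert (Hd2 : forall N, (2 <= N)%nat ->
            exists d2, is_star_discrepancy lambda1_Ico0 (empirical_Ico0 v N) d2).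
  { intros N HN; apply (star_discrepancy_exists _ _ 1); intros b Hb.
    pose proof (empirical_Ico0_range v N b ltac:(lia)); unfold lambda1_Ico0.
    apply Rabs_le; lra. }
  split; [|split].
  - intros k _; apply quantile_range.
  - intros N HN HNM; destruct (Hd2 N HN) as [d2 Hd2N].
    destruct (star_discrepancy_reparam_le _ _ _ _ _ Hcdf_range (Hdiff N HNM) d2 Hd2N)
      as [d1 [Hd1 Hle]].
    now exists d1, d2.
  - intros Hatomless N HN HNM; destruct (Hd2 N HN) as [d2 Hd2N]; exists d2; split; auto.
    apply (star_discrepancy_reparam_eq _ _ _ _ _ Hcdf_range (Hdiff N HNM)); auto.
    intros c Hc; exists (quantile mu c); split; [apply quantile_range | now apply cdf_quantile].
Qed.
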